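(* Let $\gamma$ be a conformal metric on $\mathbb C_\infty$ invariant under radial reflection, $\theta^*\gamma=\gamma$. Then for every $F\in\Upsilon_{0,B_0}$, $$\langle(\Theta F)\,F\rangle_\gamma\ge0.$$
   Context: Riemann sphere $\mathbb C_\infty$, radial reflection $\theta(z)=z/|z|^2=\bar z^{-1}$, $B_0=\{|z|<1\}$. Symbols: a symbol is a finite sequence $Z=[k_1,z_1,\dots,k_n,z_n]$ with $k_i\in\mathbb Z$, $z_i\in\mathbb C_\infty$; the product of symbols is concatenation. $\Upsilon$ is the free complex algebra generated by this monoid (finitely supported formal sums $F=\sum_ZF(Z)Z$); $\Upsilon_0$ consists of $F$ with $F(Z)=0$ whenever $Z$ has two coinciding points; $\Upsilon_A$ of $F$ with $F(Z)=0$ whenever $Z$ has a point outside $A$; $\Upsilon_{0,A}=\Upsilon_0\cap\Upsilon_A$. $\Theta[k_1,z_1,\dots,k_n,z_n]=[-k_1,\theta z_1,\dots,-k_n,\theta z_n]$, extended anti-linearly to $\Upsilon$. Expectations: for a conformal metric $\gamma=e^\sigma|dz|^2$ and $Z$ with distinct points all in $\mathbb C$, $\langle Z\rangle_\gamma=0$ if $\sum k_i\ne0$ and $\langle Z\rangle_\gamma=\exp(-\frac1{8\pi}\sum_ik_i^2\sigma(z_i))\prod_{i<j}|z_i-z_j|^{k_ik_j/2\pi}$ if $\sum k_i=0$ (this is the $\mu\to0$, then regularization-removed, limit of regularized exponentials $\prod[e^{ik_i\phi(z_i)}]_r$ of the Gaussian field with covariance $(-\Delta_\gamma+\mu)^{-1}$).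 If some point is $\infty$, set $\langle Z\rangle_\gamma=\langle[k_1,\beta^{-1}(z_1),\dots,k_n,\beta^{-1}(z_n)]\rangle_{\beta^*\gamma}$ for any Möbius map $\beta$ with all $\beta^{-1}(z_i)\in\mathbb C$ (independent of $\beta$). Extend linearly: $\langle F\rangle_\gamma=\sum_ZF(Z)\langle Z\rangle_\gamma$ for $F\in\Upsilon_0$. *)

From Stdlib Require Import Reals List ZArith ClassicalEpsilon.
From Coquelicot Require Import Coquelicot.
Import ListNotations.
Open Scope R_scope.

(** * Riemann sphere: [None] is the point at infinity. *)
Definition pt := option C.

Definition thetaC (z : C) : C := Cinv (Cconj z).
Definition theta (p : pt) : pt :=
  match p with
  | None => Some (RtoC 0)
  | Some z => if Ceq_dec z (RtoC 0) then None else Some (thetaC z)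
  end.

Definition symbol := list (Z * pt).

Definition pt_eq_dec (p q : pt) : {p = q} + {p <> q}.
Proof. decide equality; apply Ceq_dec. Defined.
Definition sym_eq_dec (Z1 Z2 : symbol) : {Z1 = Z2} + {Z1 <> Z2}.
Proof. apply list_eq_dec. intros [k p] [l q]. decide equality; [apply pt_eq_dec | apply Z.eq_dec]. Defined.

Definition Theta_sym (Zs : symbol) : symbol :=
  map (fun kp => (Z.opp (fst kp), theta (snd kp))) Zs.

(** * The free algebra Upsilon: an element is represented by a finite list of
    (coefficient, symbol) pairs, standing for the formal sum of c * Z.
    Its coefficient function F(Z) is [coef F Z]. *)
Definition formal := list (C * symbol).

Definition coef (F : formal) (Zs : symbol) : C :=
  fold_right Cplus (RtoC 0)
    (map (fun cz => if sym_eq_dec (snd cz) Zs then fst cz else RtoC 0) F).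

Definition mul_formal (F G : formal) : formal :=
  flat_map (fun cz1 => map (fun cz2 => (Cmult (fst cz1) (fst cz2), snd cz1 ++ snd cz2)) G) F.

Definition Theta (F : formal) : formal :=
  map (fun cz => (Cconj (fst cz), Theta_sym (snd cz))) F.

Definition distinct_pts (Zs : symbol) : Prop := NoDup (map snd Zs).

Definition in_B0 (p : pt) : Prop :=
  match p with Some z => Cmod z < 1 | None => False end.

Definition in_Upsilon_0_B0 (F : formal) : Prop :=
  forall Zs, coef F Zs <> RtoC 0 ->
    distinct_pts Zs /\ List.Forall (fun kp => in_B0 (snd kp)) Zs.

Definition dx (f : C -> R) : C -> R := fun z => Derive (fun t => f (t, snd z)) (fst z).
Definition dy (f : C -> R) : C -> R := fun z => Derive (fun t => f (fst z, t)) (snd z).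

Fixpoint Ck (n : nat) (f : C -> R) : Prop :=
  (forall z, continuous f z) /\
  match n with
  | O => True
  | S m => (forall z, ex_derive (fun t => f (t, snd z)) (fst z)
                   /\ ex_derive (fun t => f (fst z, t)) (snd z))
           /\ Ck m (dx f) /\ Ck m (dy f)
  end.

Definition smooth (f : C -> R) : Prop := forall n, Ck n f.

(** * Conformal metric on the Riemann sphere:
    gamma = e^sigma |dz|^2 in the chart z on C, and
    gamma = e^sigma_inf |dw|^2 in the chart w = 1/z around infinity,
    both densities smooth and compatible on the overlap. *)
Record sphere_metric := {
  sigma : C -> R;
  sigma_inf : C -> R;
  sigma_smooth : smooth sigma;
  sigma_inf_smooth : smooth sigma_inf;
  sigma_compat : forall w, w <> RtoC 0 ->
      sigma_inf w = sigma (Cinv w) - 4 * ln (Cmod w)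
}.

(** Since |d theta|^2 = |z|^{-4} |dz|^2, on C\{0} the
    pull-back has density sigma(theta z) - 4 ln|z|; at z = 0 the pull-back,
    computed in the chart w = 1/theta(z) = conj z at infinity, has density
    sigma_inf(0). *)
Definition reflection_invariant (g : sphere_metric) : Prop :=
  (forall z, z <> RtoC 0 -> sigma g z = sigma g (thetaC z) - 4 * ln (Cmod z)) /\
  sigma g 0 = sigma_inf g 0.

Fixpoint pair_prod (l : list (Z * C)) : R :=
  match l with
  | [] => 1
  | (k, z) :: t =>
      fold_right Rmult 1
        (map (fun lw => Rpower (Cmod (Cminus z (snd lw)))
                                (IZR k * IZR (fst lw) / (2 * PI))) t)
      * pair_prod t
  end.

Definition E_fin (s : C -> R) (l : list (Z * C)) : R :=
  if Z.eq_dec (fold_right Z.add 0%Z (map fst l)) 0%Z then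
    exp (- (1 / (8 * PI)) *
         fold_right Rplus 0 (map (fun kz => IZR (fst kz) ^ 2 * s (snd kz)) l))
    * pair_prod l
  else 0.

(** Mobius map beta_a(w) = a + 1/w (beta_a(0) = infinity, beta_a(infinity) = a);
    its inverse sends infinity to 0 and z to 1/(z - a). *)
Definition beta_inv (a : C) (p : pt) : C :=
  match p with None => RtoC 0 | Some z => Cinv (Cminus z a) end.

(** density of the pull-back metric beta_a^* gamma in the coordinate w:
    for w <> 0, sigma(a + 1/w) + 2 ln|beta_a'(w)| = sigma(a+1/w) - 4 ln|w|;
    at w = 0 (mapped to infinity), in the chart u = 1/beta_a(w) = w/(1+a w)
    with u'(0) = 1, it is sigma_inf(0). *)
Definition pull_sigma (g : sphere_metric) (a : C) (w : C) : R :=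
  if Ceq_dec w (RtoC 0) then sigma_inf g (RtoC 0)
  else sigma g (Cplus a (Cinv w)) - 4 * ln (Cmod w).

Fixpoint all_finite (Zs : symbol) : option (list (Z * C)) :=
  match Zs with
  | [] => Some []
  | (k, Some z) :: t =>
      match all_finite t with Some l => Some ((k, z) :: l) | None => None end
  | (_, None) :: _ => None
  end.

(** a := 1 + sum of |z_i| over the finite points: not one of the points. *)
Definition choose_a (Zs : symbol) : C :=
  RtoC (1 + fold_right Rplus 0
              (map (fun kp => match snd kp with Some z => Cmod z | None => 0 end) Zs)).

(** <Z>_gamma for a symbol with distinct points (0 by convention otherwise; this
    case never contributes for elements of Upsilon_0). If a point is infinity,
    use <[k_i, beta^{-1}(z_i)]>_{beta^* gamma} with the Mobius map beta = beta_a. *)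
Definition E_sym (g : sphere_metric) (Zs : symbol) : R :=
  if excluded_middle_informative (distinct_pts Zs) then
    match all_finite Zs with
    | Some l => E_fin (sigma g) l
    | None =>
        let a := choose_a Zs in
        E_fin (pull_sigma g a) (map (fun kp => (fst kp, beta_inv a (snd kp))) Zs)
    end
  else 0.

Definition E (g : sphere_metric) (F : formal) : C :=
  fold_right Cplus (RtoC 0)
    (map (fun Zs => Cmult (coef F Zs) (RtoC (E_sym g Zs)))
         (nodup sym_eq_dec (map snd F))).

(* For symbols Z1, Z2 with points in B_0, the point of [Theta Z1] coming from w in Z1 sits at
   1/conj w, and ln|1/conj w - 1/conj w'| and ln|1/conj w - z| differ from ln|w - w'| and
   ln|1 - conj w z| by terms -ln|w| attached to single points.  For a neutral configuration such
   terms cancel against the change of the metric density; this is where theta^* gamma = gamma is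
   used.  When 0 is a point of Z1 its image is infinity and the same computation is done in the
   Moebius chart used to define the expectation.  Hence, with q the total charge,
     <(Theta Z1) Z2> = [q Z1 = q Z2] e^(S Z1) e^(S Z2) e^(T(Z1, Z2)),
     T(Z1, Z2) = -(1/2 pi) sum k_p k_q ln|1 - conj w_p z_q|.
   Since -ln|1 - conj w z| = sum_n Re (conj w^n z^n) / n, T is a limit of nonnegative combinations
   of products phi(Z1) phi(Z2), so e^T is a positive semidefinite kernel (Schur product theorem
   through the exponential series), and so are its rescaling by e^S and its restriction to equal
   charges.  Finally <(Theta F) F> = sum conj F(Z1) F(Z2) <(Theta Z1) Z2> is the Hermitian form of
   this real symmetric kernel. *)

From Stdlib Require Import Reals List ZArith Lra Lia ClassicalEpsilon.
From Coquelicot Require Import Coquelicot.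
Import ListNotations.
Open Scope R_scope.

Definition lsum {A} (f : A -> R) (l : list A) : R := fold_right Rplus 0 (map f l).
Definition csum {A} (f : A -> C) (l : list A) : C := fold_right Cplus (RtoC 0) (map f l).

(* [nsum f N] is the sum over [n < N]; Stdlib's [sum_f_R0 f N] includes [n = N]. *)
Fixpoint nsum (f : nat -> R) (N : nat) : R :=
  match N with O => 0 | S n => nsum f n + f n end.

Lemma lsum_cons {A} (f : A -> R) x l : lsum f (x :: l) = f x + lsum f l.
Proof. reflexivity. Qed.

Lemma lsum_app {A} (f : A -> R) l1 l2 : lsum f (l1 ++ l2) = lsum f l1 + lsum f l2.
Proof. induction l1 as [|x l1 IH]; simpl; [unfold lsum; simpl; lra|]. rewrite !lsum_cons, IH; lra. Qed.

Lemma lsum_ext {A} (f g : A -> R) l :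
  (forall x, In x l -> f x = g x) -> lsum f l = lsum g l.
Proof.
  induction l as [|x l IH]; intros H; auto.
  rewrite !lsum_cons, H, IH; simpl; auto.
  intros; apply H; simpl; auto.
Qed.

Lemma lsum_plus {A} (f g : A -> R) l : lsum (fun x => f x + g x) l = lsum f l + lsum g l.
Proof. induction l; [unfold lsum; simpl; lra|]. rewrite !lsum_cons, IHl; lra. Qed.

Lemma lsum_scal {A} (f : A -> R) c l : lsum (fun x => c * f x) l = c * lsum f l.
Proof. induction l; [unfold lsum; simpl; lra|]. rewrite !lsum_cons, IHl; lra. Qed.

Lemma lsum_opp {A} (f : A -> R) l : lsum (fun x => - f x) l = - lsum f l.
Proof. induction l; [unfold lsum; simpl; lra|]. rewrite !lsum_cons, IHl; lra. Qed.

Lemma lsum_eq0 {A} (f : A -> R) l : (forall x, In x l -> f x = 0) -> lsum f l = 0.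
Proof.
  induction l as [|x l IH]; intros H; [reflexivity|].
  rewrite lsum_cons, IH by (intros; apply H; simpl; auto).
  rewrite H; simpl; auto; lra.
Qed.

Lemma lsum_exchange {A B} (f : A -> B -> R) l1 l2 :
  lsum (fun x => lsum (f x) l2) l1 = lsum (fun y => lsum (fun x => f x y) l1) l2.
Proof.
  induction l1 as [|x l1 IH]; simpl.
    symmetry; apply lsum_eq0; reflexivity.
  - rewrite lsum_cons, IH, <- lsum_plus. apply lsum_ext; intros; rewrite lsum_cons; lra.
Qed.

Lemma lsum_map {A B} (f : B -> R) (g : A -> B) l : lsum f (map g l) = lsum (fun x => f (g x)) l.
Proof. unfold lsum. rewrite map_map. reflexivity. Qed.

Lemma lsum_ge0 {A} (f : A -> R) l : (forall x, In x l -> 0 <= f x) -> 0 <= lsum f l.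
Proof.
  induction l; intros H; [unfold lsum; simpl; lra|].
  rewrite lsum_cons. apply Rplus_le_le_0_compat; [apply H; simpl; auto|].
  apply IHl; intros; apply H; simpl; auto.
Qed.

Lemma lsum_ge_term {A} (f : A -> R) l x :
  (forall y, In y l -> 0 <= f y) -> In x l -> f x <= lsum f l.
Proof.
  induction l as [|a l IH]; intros H Hx; [destruct Hx|]. rewrite lsum_cons.
  assert (0 <= f a) by (apply H; simpl; auto).
  assert (0 <= lsum f l) by (apply lsum_ge0; intros; apply H; simpl; auto).
  destruct Hx as [<-|Hx]; [lra|].
  assert (f x <= lsum f l) by (apply IH; auto; intros; apply H; simpl; auto). lra.
Qed.

Lemma is_lim_seq_lsum {A} (u : nat -> A -> R) (v : A -> R) l :
  (forall x, In x l -> is_lim_seq (fun N => u N x) (v x)) ->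
  is_lim_seq (fun N => lsum (u N) l) (lsum v l).
Proof.
  induction l as [|x l IH]; intros H; [apply is_lim_seq_const|].
  apply (is_lim_seq_ext (fun N => u N x + lsum (u N) l)); [reflexivity|].
  apply is_lim_seq_plus'; [apply H; simpl; auto|].
  apply IH; intros; apply H; simpl; auto.
Qed.

Lemma lsum_nsum {A} (f : A -> nat -> R) l N :
  lsum (fun x => nsum (f x) N) l = nsum (fun n => lsum (fun x => f x n) l) N.
Proof.
  induction N; simpl; [apply lsum_eq0; auto|].
  rewrite lsum_plus, IHN. reflexivity.
Qed.

Lemma lsum_indicator {B} (eq_dec : forall x y : B, {x = y} + {x <> y})
  (V : list B) (u : B) (f : B -> R) :
  NoDup V -> In u V -> lsum (fun v => if eq_dec u v then f v else 0) V = f u.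
Proof.
  induction V as [|a V IH]; intros Hn Hi; [destruct Hi|]. inversion Hn; subst.
  rewrite lsum_cons. destruct (eq_dec u a) as [<-|Hne].
  - rewrite lsum_eq0; [lra|]. intros x Hx. destruct (eq_dec u x); subst; tauto.
  - destruct Hi; [congruence|]. rewrite IH; auto; lra.
Qed.

Lemma nsum_ext f g N : (forall n, (n < N)%nat -> f n = g n) -> nsum f N = nsum g N.
Proof. induction N; intros H; simpl; auto. f_equal; [apply IHN; intros|]; apply H; lia. Qed.

Lemma nsum_scal f c N : nsum (fun n => c * f n) N = c * nsum f N.
Proof. induction N; simpl; lra. Qed.

(** * Positive semidefinite kernels *)

Definition quad_form {A} (K : A -> A -> R) (y : A -> R) (l : list A) : R :=
  lsum (fun a => lsum (fun b => y a * y b * K a b) l) l.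

Definition psd_on {A} (P : A -> Prop) (K : A -> A -> R) : Prop :=
  forall l y, (forall a, In a l -> P a) -> 0 <= quad_form K y l.

Lemma quad_form_ext {A} (K1 K2 : A -> A -> R) y l :
  (forall a b, In a l -> In b l -> K1 a b = K2 a b) -> quad_form K1 y l = quad_form K2 y l.
Proof.
  intros H. unfold quad_form.
  apply lsum_ext; intros; apply lsum_ext; intros. rewrite H; auto.
Qed.

Lemma quad_form_plus {A} (K1 K2 : A -> A -> R) y l :
  quad_form (fun a b => K1 a b + K2 a b) y l = quad_form K1 y l + quad_form K2 y l.
Proof.
  unfold quad_form. rewrite <- lsum_plus. apply lsum_ext; intros.
  rewrite <- lsum_plus. apply lsum_ext; intros. ring.
Qed.

Lemma quad_form_scal {A} (K : A -> A -> R) c y l :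
  quad_form (fun a b => c * K a b) y l = c * quad_form K y l.
Proof.
  unfold quad_form. rewrite <- lsum_scal. apply lsum_ext; intros.
  rewrite <- lsum_scal. apply lsum_ext; intros. ring.
Qed.

Lemma quad_form_rescale {A} (K : A -> A -> R) (phi : A -> R) y l :
  quad_form (fun a b => phi a * phi b * K a b) y l = quad_form K (fun a => y a * phi a) l.
Proof. unfold quad_form. apply lsum_ext; intros; apply lsum_ext; intros. ring. Qed.

Lemma quad_form_sum_f_R0 {A} (K : A -> A -> R) (G : nat -> A -> A -> R) y l N :
  quad_form (fun a b => K a b * sum_f_R0 (fun k => G k a b) N) y l =
  sum_f_R0 (fun k => quad_form (fun a b => K a b * G k a b) y l) N.
Proof.
  induction N; simpl; [reflexivity|].
  rewrite <- IHN, <- quad_form_plus. apply quad_form_ext; intros; ring.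
Qed.

Lemma psd_on_const1 {A} (P : A -> Prop) : psd_on P (fun _ _ => 1).
Proof.
  intros l y _. unfold quad_form.
  rewrite (lsum_ext _ (fun a => lsum y l * y a)).
  - rewrite lsum_scal. apply Rle_0_sqr.
  - intros. rewrite Rmult_comm, <- lsum_scal. apply lsum_ext; intros; ring.
Qed.

Lemma psd_on_rescale {A} (P : A -> Prop) K (phi : A -> R) :
  psd_on P K -> psd_on P (fun a b => phi a * phi b * K a b).
Proof. intros H l y Hl. rewrite quad_form_rescale. apply H; auto. Qed.

Lemma psd_on_lim {A} (P : A -> Prop) (Kn : nat -> A -> A -> R) (K : A -> A -> R) :
  (forall N, psd_on P (Kn N)) ->
  (forall a b, P a -> P b -> is_lim_seq (fun N => Kn N a b) (K a b)) ->
  psd_on P K.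
Proof.
  intros HKn Hlim l y Hl.
  assert (Hq : is_lim_seq (fun N => quad_form (Kn N) y l) (quad_form K y l)).
  { apply is_lim_seq_lsum; intros a Ha. apply is_lim_seq_lsum; intros b Hb.
    exact (is_lim_seq_scal_l _ _ (K a b) (Hlim a b (Hl a Ha) (Hl b Hb))). }
  exact (is_lim_seq_le (fun _ => 0) _ 0 _ (fun N => HKn N l y Hl) (is_lim_seq_const 0) Hq).
Qed.

(* Splitting the coefficient vector along the level sets of [q] writes the form as a sum of forms of [K]. *)
Lemma psd_on_indicator {A B} (eq_dec : forall x y : B, {x = y} + {x <> y})
  (P : A -> Prop) K (q : A -> B) :
  psd_on P K -> psd_on P (fun a b => if eq_dec (q a) (q b) then K a b else 0).
Proof.
  intros H l y Hl.
  set (V := nodup eq_dec (map q l)).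
  set (y_v := fun v a => y a * (if eq_dec (q a) v then 1 else 0)).
  assert (Hsplit : quad_form (fun a b => if eq_dec (q a) (q b) then K a b else 0) y l =
                   lsum (fun v => quad_form K (y_v v) l) V).
  { unfold quad_form, y_v. symmetry. rewrite lsum_exchange. apply lsum_ext; intros a Ha.
    rewrite lsum_exchange. apply lsum_ext; intros b Hb.
    rewrite (lsum_ext _ (fun v => if eq_dec (q a) v then
               y a * y b * (if eq_dec (q b) v then 1 else 0) * K a b else 0))
      by (intros v _; destruct (eq_dec (q a) v), (eq_dec (q b) v); ring).
    rewrite (lsum_indicator eq_dec V (q a)).
    - destruct (eq_dec (q b) (q a)), (eq_dec (q a) (q b)); try congruence; ring.
    - apply NoDup_nodup.
    - apply nodup_In, in_map; auto. }
  rewrite Hsplit. apply lsum_ge0; intros. apply H; auto.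
Qed.

(* Schur product with [exp (alpha phi a phi b)], whose exponential series has nonnegative rank-one terms. *)
Lemma psd_on_mul_exp_rank1 {A} (P : A -> Prop) K (alpha : R) (phi : A -> R) :
  psd_on P K -> 0 <= alpha -> psd_on P (fun a b => K a b * exp (alpha * phi a * phi b)).
Proof.
  intros H Halpha.
  apply (psd_on_lim P (fun N a b => K a b * E1 (alpha * phi a * phi b) N)).
  - intros N l y Hl. unfold E1. rewrite quad_form_sum_f_R0.
    apply cond_pos_sum. intros k.
    rewrite (quad_form_ext _ (fun a b => (/ INR (fact k) * alpha ^ k) *
                                         (phi a ^ k * phi b ^ k * K a b)))
      by (intros; rewrite !Rpow_mult_distr; ring).
    rewrite quad_form_scal, quad_form_rescale. apply Rmult_le_pos; [|apply H; auto].
    apply Rmult_le_pos; [|apply pow_le; auto].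
    left; apply Rinv_0_lt_compat, INR_fact_lt_0.
  - intros a b _ _. apply (is_lim_seq_scal_l _ _ (exp _)).
    apply is_lim_seq_Reals, E1_cvg.
Qed.

Lemma psd_on_exp_nsum {A} (P : A -> Prop) (alpha : nat -> R) (phi psi : nat -> A -> R) N :
  (forall n, 0 <= alpha n) ->
  psd_on P (fun a b => exp (nsum (fun n => alpha n * (phi n a * phi n b + psi n a * psi n b)) N)).
Proof.
  intros Halpha. induction N as [|N IH]; simpl.
  - intros l y Hl. rewrite exp_0. exact (psd_on_const1 P l y Hl).
  - assert (Hstep := psd_on_mul_exp_rank1 P _ (alpha N) (psi N)
              (psd_on_mul_exp_rank1 P _ (alpha N) (phi N) IH (Halpha N)) (Halpha N)).
    intros l y Hl.
    rewrite (quad_form_ext _ (fun a b =>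
      exp (nsum (fun n => alpha n * (phi n a * phi n b + psi n a * psi n b)) N) *
      exp (alpha N * phi N a * phi N b) * exp (alpha N * psi N a * psi N b)))
      by (intros; rewrite <- !exp_plus; f_equal; ring).
    exact (Hstep l y Hl).
Qed.

(** * The series of [-ln |1 - y|] *)

Fixpoint nsumC (f : nat -> C) (N : nat) : C :=
  match N with O => RtoC 0 | S n => Cplus (nsumC f n) (f n) end.

Lemma Re_nsumC f N : Re (nsumC f N) = nsum (fun n => Re (f n)) N.
Proof. induction N; simpl; auto. unfold Re in *. simpl. rewrite IHN. reflexivity. Qed.

Lemma Cmod_sqr (x : C) : Cmod x ^ 2 = fst x ^ 2 + snd x ^ 2.
Proof.
  unfold Cmod. rewrite pow2_sqrt; auto.
  apply Rplus_le_le_0_compat; apply pow2_ge_0.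
Qed.

Lemma ln_Cmod (x : C) : x <> 0 -> ln (Cmod x) = / 2 * ln (fst x ^ 2 + snd x ^ 2).
Proof.
  intros H. apply Cmod_gt_0 in H. rewrite <- Cmod_sqr. simpl. rewrite Rmult_1_r.
  rewrite ln_mult by auto. field.
Qed.

(* [-ln |1 - t y|] and its [t]-derivative, written in coordinates so that [auto_derive] applies. *)
Definition neglog_ray (y : C) (t : R) : R :=
  - / 2 * ln ((1 - t * fst y) ^ 2 + (t * snd y) ^ 2).
Definition neglog_ray' (y : C) (t : R) : R :=
  (fst y - t * (fst y ^ 2 + snd y ^ 2)) / ((1 - t * fst y) ^ 2 + (t * snd y) ^ 2).

Definition log_partial (y : C) (N : nat) (t : R) : R :=
  nsum (fun n => Re (Cpow y (S n)) * t ^ S n / INR (S n)) N.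
Definition log_partial' (y : C) (N : nat) (t : R) : R :=
  nsum (fun n => Re (Cpow y (S n)) * t ^ n) N.

Lemma ray_den_Cmod (y : C) (t : R) :
  (1 - t * fst y) ^ 2 + (t * snd y) ^ 2 = Cmod (1 - t * y) ^ 2.
Proof. rewrite Cmod_sqr. destruct y as [u v]. simpl. ring. Qed.

Lemma Cmod_one_minus_ray_ge (y : C) (t : R) :
  0 <= t <= 1 -> 1 - Cmod y <= Cmod (1 - t * y).
Proof.
  intros Ht.
  assert (Htri : Cmod 1 <= Cmod (1 - t * y) + Cmod (t * y)).
  { rewrite <- Cmod_triangle. right. f_equal. ring. }
  rewrite Cmod_1, Cmod_mult, Cmod_R, Rabs_pos_eq in Htri by lra.
  assert (0 <= Cmod y) by apply Cmod_ge_0. nra.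
Qed.

Lemma ray_den_pos (y : C) (t : R) :
  Cmod y < 1 -> 0 <= t <= 1 -> 0 < (1 - t * fst y) ^ 2 + (t * snd y) ^ 2.
Proof.
  intros Hy Ht. rewrite ray_den_Cmod. apply pow_lt.
  assert (H := Cmod_one_minus_ray_ge y t Ht). lra.
Qed.

Lemma is_derive_neglog_ray (y : C) (t : R) :
  0 < (1 - t * fst y) ^ 2 + (t * snd y) ^ 2 -> is_derive (neglog_ray y) t (neglog_ray' y t).
Proof. intros H. unfold neglog_ray, neglog_ray'. auto_derive; [lra | field; lra]. Qed.

Lemma is_derive_log_partial (y : C) N (t : R) : is_derive (log_partial y N) t (log_partial' y N t).
Proof.
  induction N; unfold log_partial, log_partial'; simpl.
  - apply (is_derive_const 0).
  - apply (is_derive_plus (log_partial y N) (fun t => Re (Cpow y (S N)) * t ^ S N / INR (S N))); auto.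
    auto_derive; auto.
    change (match N with 0%nat => 1 | S _ => INR N + 1 end) with (INR (S N)).
    field. apply not_0_INR. lia.
Qed.

Lemma neglog_ray'_Re (y : C) (t : R) :
  0 < (1 - t * fst y) ^ 2 + (t * snd y) ^ 2 ->
  neglog_ray' y t = Re (y / (1 - t * y)).
Proof. intros H. unfold neglog_ray'. destruct y as [u v]. unfold Re; simpl in *. field. lra. Qed.

Lemma geom_nsumC (y : C) N (t : R) :
  (nsumC (fun n => Cpow y (S n) * (t ^ n)%R) N * (1 - t * y))%C
  = (y - Cpow y (S N) * (t ^ N)%R)%C.
Proof.
  induction N; [simpl; ring|]. cbn [nsumC].
  rewrite Cmult_plus_distr_r, IHN. simpl. rewrite RtoC_mult. ring.
Qed.

Lemma log_partial'_Re (y : C) N (t : R) : (1 - t * y)%C <> 0 ->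
  log_partial' y N t =
  Re ((y - Cpow y (S N) * (t ^ N)%R) / (1 - t * y)).
Proof.
  intros Hw. rewrite <- geom_nsumC. unfold Cdiv.
  rewrite <- Cmult_assoc, Cinv_r, Cmult_1_r by auto.
  rewrite Re_nsumC. apply nsum_ext. intros. unfold Re; simpl. ring.
Qed.

Lemma log_partial'_err (y : C) N (t : R) : Cmod y < 1 -> 0 <= t <= 1 ->
  Rabs (neglog_ray' y t - log_partial' y N t) <= Cmod y ^ S N / (1 - Cmod y).
Proof.
  intros Hy Ht.
  set (w := (1 - t * y)%C).
  assert (Hw : 1 - Cmod y <= Cmod w) by (apply Cmod_one_minus_ray_ge; auto).
  assert (Hw0 : w <> 0) by (intro E; rewrite E, Cmod_0 in Hw; lra).
  rewrite neglog_ray'_Re, log_partial'_Re by (auto using ray_den_pos). fold w.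
  replace (Re (y / w) - Re ((y - Cpow y (S N) * (t ^ N)%R) / w))
    with (Re (Cpow y (S N) * (t ^ N)%R / w))
    by (unfold Cdiv, Cminus; rewrite Cmult_plus_distr_r; unfold Re; simpl; ring).
  eapply Rle_trans; [apply re_le_Cmod|].
  rewrite Cmod_div, Cmod_mult, Cmod_pow, Cmod_R by auto.
  assert (0 <= Cmod y) by apply Cmod_ge_0.
  assert (0 <= t ^ N <= 1) by (split; [apply pow_le | rewrite <- (pow1 N); apply pow_incr]; lra).
  assert (0 <= Cmod y ^ S N) by (apply pow_le; auto).
  rewrite Rabs_pos_eq by lra. unfold Rdiv.
  apply Rmult_le_compat; try nra.
  - left; apply Rinv_0_lt_compat; lra.
  - apply Rinv_le_contravar; lra.
Qed.

Lemma neglog_ray_0 (y : C) : neglog_ray y 0 = 0.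
Proof.
  unfold neglog_ray. replace ((1 - 0 * fst y) ^ 2 + (0 * snd y) ^ 2) with 1 by ring.
  rewrite ln_1. ring.
Qed.

Lemma neglog_ray_1 (y : C) : Cmod y < 1 -> neglog_ray y 1 = - ln (Cmod (1 - y)).
Proof.
  intros Hy. assert (H := ray_den_pos y 1 Hy ltac:(lra)). rewrite ray_den_Cmod in H.
  replace (1 * y)%C with y in H by ring.
  assert (H0 : (1 - y)%C <> 0) by (intro E; rewrite E, Cmod_0 in H; simpl in H; lra).
  rewrite ln_Cmod, Ropp_mult_distr_l by auto. unfold neglog_ray.
  destruct y as [u v]. simpl. do 2 f_equal. ring.
Qed.

Lemma log_partial_0 (y : C) N : log_partial y N 0 = 0.
Proof.
  unfold log_partial. induction N; [reflexivity|]. cbn [nsum].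
  rewrite IHN, pow_i by lia. unfold Rdiv. ring.
Qed.

Lemma log_partial_1 (y : C) N :
  log_partial y N 1 = nsum (fun n => Re (Cpow y (S n)) / INR (S n)) N.
Proof. apply nsum_ext; intros. rewrite pow1. unfold Rdiv. ring. Qed.

(* Mean value theorem on [0, 1] for [t |-> -ln|1 - t y| - log_partial y N t]. *)
Lemma neglog_partial_err (y : C) N : Cmod y < 1 ->
  Rabs (- ln (Cmod (1 - y)) - nsum (fun n => Re (Cpow y (S n)) / INR (S n)) N)
  <= Cmod y ^ S N / (1 - Cmod y).
Proof.
  intros Hy.
  assert (Hder : forall t, 0 <= t <= 1 -> is_derive (fun t => neglog_ray y t - log_partial y N t) t
                                              (neglog_ray' y t - log_partial' y N t)).
  { intros t Ht. apply (is_derive_minus (neglog_ray y) (log_partial y N)); [|apply is_derive_log_partial].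
    apply is_derive_neglog_ray, ray_den_pos; auto. }
  destruct (MVT_gen (fun t => neglog_ray y t - log_partial y N t) 0 1
                    (fun t => neglog_ray' y t - log_partial' y N t)) as [c [Hc Hm]].
  - intros x Hx. rewrite Rmin_left, Rmax_right in Hx by lra. apply Hder. lra.
  - intros x Hx. rewrite Rmin_left, Rmax_right in Hx by lra.
    apply continuity_pt_filterlim, (ex_derive_continuous (fun t => neglog_ray y t - log_partial y N t)).
    eexists. apply Hder. lra.
  - rewrite Rmin_left, Rmax_right in Hc by lra.
    rewrite neglog_ray_0, log_partial_0, neglog_ray_1, log_partial_1 in Hm by auto.
    rewrite !Rminus_0_r, Rmult_1_r in Hm. rewrite Hm. apply log_partial'_err; auto.
Qed.

Lemma is_lim_seq_neglog (y : C) : Cmod y < 1 ->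
  is_lim_seq (fun N => nsum (fun n => Re (Cpow y (S n)) / INR (S n)) N) (- ln (Cmod (1 - y))).
Proof.
  intros Hy.
  set (L := - ln (Cmod (1 - y))).
  set (err := fun N => Cmod y ^ S N / (1 - Cmod y)).
  assert (Herr : is_lim_seq err 0).
  { apply (is_lim_seq_ext (fun N => (Cmod y / (1 - Cmod y)) * Cmod y ^ N)).
    - intros; unfold err; simpl; field; lra.
    - replace 0 with (Cmod y / (1 - Cmod y) * 0) by ring.
      apply (is_lim_seq_scal_l _ _ (Finite 0)), is_lim_seq_geom.
      rewrite Rabs_pos_eq; auto. apply Cmod_ge_0. }
  assert (Hd : is_lim_seq (fun N => L - nsum (fun n => Re (Cpow y (S n)) / INR (S n)) N) 0).
  { apply (is_lim_seq_le_le (fun N => - err N) _ err); auto.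
    - intros N. apply Rabs_le_between, neglog_partial_err; auto.
    - replace 0 with (-1 * 0) by ring.
      apply (is_lim_seq_ext (fun N => -1 * err N)); [intros; ring|].
      apply (is_lim_seq_scal_l _ _ (Finite 0)); auto. }
  apply (is_lim_seq_ext (fun N => L - (L - nsum (fun n => Re (Cpow y (S n)) / INR (S n)) N)));
    [intros; ring|].
  replace (Finite L) with (Finite (L - 0)) by (f_equal; ring).
  apply (is_lim_seq_minus' (fun _ => L)); [apply is_lim_seq_const | exact Hd].
Qed.

Fixpoint pair_sum {A} (f : A -> A -> R) (l : list A) : R :=
  match l with [] => 0 | x :: t => lsum (f x) t + pair_sum f t end.

Lemma pair_sum_app {A} (f : A -> A -> R) l1 l2 :
  pair_sum f (l1 ++ l2) = pair_sum f l1 + pair_sum f l2 + lsum (fun x => lsum (f x) l2) l1.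
Proof.
  induction l1 as [|x l1 IH]; simpl; [unfold lsum; simpl; lra|].
  rewrite lsum_app, IH, lsum_cons. lra.
Qed.

Lemma pair_sum_map {A B} (f : B -> B -> R) (g : A -> B) l :
  pair_sum f (map g l) = pair_sum (fun x y => f (g x) (g y)) l.
Proof. induction l; simpl; auto. rewrite IHl, lsum_map. reflexivity. Qed.

Lemma pair_sum_plus {A} (f g : A -> A -> R) l :
  pair_sum (fun x y => f x y + g x y) l = pair_sum f l + pair_sum g l.
Proof. induction l; simpl; [lra|]. rewrite IHl, lsum_plus. lra. Qed.

Lemma pair_sum_scal {A} (f : A -> A -> R) c l :
  pair_sum (fun x y => c * f x y) l = c * pair_sum f l.
Proof. induction l; simpl; [lra|]. rewrite IHl, lsum_scal. lra. Qed.

Lemma pair_sum_ext_ordered {A} (f g : A -> A -> R) l :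
  ForallOrdPairs (fun x y => f x y = g x y) l -> pair_sum f l = pair_sum g l.
Proof.
  induction 1 as [|x l Hx _ IH]; simpl; auto. rewrite IH. f_equal.
  apply lsum_ext. rewrite Forall_forall in Hx. auto.
Qed.

Lemma pair_sum_ext {A} (f g : A -> A -> R) l :
  (forall x y, f x y = g x y) -> pair_sum f l = pair_sum g l.
Proof.
  intros H. apply pair_sum_ext_ordered.
  induction l; constructor; auto. apply Forall_forall; auto.
Qed.

Lemma pair_sum_marginals {A} (c L : A -> R) l :
  pair_sum (fun p q => c p * c q * (L p + L q)) l =
  lsum (fun p => c p * L p * (lsum c l - c p)) l.
Proof.
  induction l as [|a l IH]; simpl; auto. rewrite IH, !lsum_cons.
  rewrite (lsum_ext (fun q => c a * c q * (L a + L q))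
             (fun q => c a * L a * c q + c a * (c q * L q))) by (intros; ring).
  rewrite (lsum_ext (fun p => c p * L p * (c a + lsum c l - c p))
             (fun p => c a * (c p * L p) + c p * L p * (lsum c l - c p))) by (intros; ring).
  rewrite !lsum_plus, !lsum_scal. ring.
Qed.

Lemma IZR_fold_Zadd {A} (ch : A -> Z) l :
  IZR (fold_right Z.add 0%Z (map ch l)) = lsum (fun p => IZR (ch p)) l.
Proof. induction l; simpl; auto. rewrite plus_IZR, IHl, lsum_cons. reflexivity. Qed.

Definition log_energy (s : C -> R) (l : list (Z * C)) : R :=
  -(1 / (8 * PI)) * lsum (fun kz => IZR (fst kz) ^ 2 * s (snd kz)) l
  + pair_sum (fun p q => IZR (fst p) * IZR (fst q) / (2 * PI) * ln (Cmod (Cminus (snd p) (snd q)))) l.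

Lemma pair_prod_exp l :
  pair_prod l = exp (pair_sum (fun p q => IZR (fst p) * IZR (fst q) / (2 * PI) *
                                         ln (Cmod (Cminus (snd p) (snd q)))) l).
Proof.
  induction l as [|[k z] t IH]; cbn [pair_sum pair_prod]; [symmetry; apply exp_0|].
  rewrite exp_plus, <- IH. f_equal. clear IH.
  induction t as [|x t IHt]; [symmetry; apply exp_0|].
  cbn [map fold_right]. rewrite lsum_cons, exp_plus, <- IHt. reflexivity.
Qed.

Lemma E_fin_log_energy s l : E_fin s l =
  if Z.eq_dec (fold_right Z.add 0%Z (map fst l)) 0%Z then exp (log_energy s l) else 0.
Proof.
  unfold E_fin, log_energy. destruct Z.eq_dec; auto.
  rewrite pair_prod_exp, exp_plus. reflexivity.
Qed.

(* A conformal change shifts the density by [-4 L] and [ln |x_p - x_q|] by [L p + L q];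
   for a neutral configuration [sum_(p<q) k_p k_q (L p + L q) = - sum_p k_p^2 L p], so the two shifts cancel. *)
Lemma log_energy_conformal {A} (l : list A) (ch : A -> Z) (pos : A -> C) (s : C -> R)
  (s0 L : A -> R) (D : A -> A -> R) :
  ForallOrdPairs (fun p q => ln (Cmod (Cminus (pos p) (pos q))) = D p q + L p + L q) l ->
  List.Forall (fun p => s (pos p) = s0 p - 4 * L p) l ->
  lsum (fun p => IZR (ch p)) l = 0 ->
  log_energy s (map (fun p => (ch p, pos p)) l) =
  -(1 / (8 * PI)) * lsum (fun p => IZR (ch p) ^ 2 * s0 p) l
  + pair_sum (fun p q => IZR (ch p) * IZR (ch q) / (2 * PI) * D p q) l.
Proof.
  intros Hlog Hs Hneutral. unfold log_energy. rewrite lsum_map, pair_sum_map. simpl.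
  rewrite (pair_sum_ext_ordered _ (fun p q => IZR (ch p) * IZR (ch q) / (2 * PI) * D p q
            + / (2 * PI) * (IZR (ch p) * IZR (ch q) * (L p + L q)))).
  2:{ clear Hs Hneutral. induction Hlog as [|p l Hp _ IH]; constructor; auto.
      revert Hp. apply Forall_impl. intros q ->. field. apply PI_neq0. }
  rewrite pair_sum_plus, pair_sum_scal, (pair_sum_marginals (fun p => IZR (ch p))), Hneutral.
  rewrite (lsum_ext (fun p => IZR (ch p) ^ 2 * s (pos p))
             (fun p => IZR (ch p) ^ 2 * s0 p + (-4) * (IZR (ch p) ^ 2 * L p))).
  2:{ intros x Hx. rewrite Forall_forall in Hs. rewrite Hs by auto. ring. }
  rewrite (lsum_ext (fun p => IZR (ch p) * L p * (0 - IZR (ch p)))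
             (fun p => - (IZR (ch p) ^ 2 * L p))) by (intros; ring).
  rewrite lsum_plus, lsum_scal, lsum_opp.
  replace (lsum (fun p => IZR (ch p) * (IZR (ch p) * 1) * s0 p) l)
    with (lsum (fun p => IZR (ch p) ^ 2 * s0 p) l) by (apply lsum_ext; intros; ring).
  field. apply PI_neq0.
Qed.

(** * Reflection across the unit circle *)

Lemma Cconj_0 : Cconj 0 = 0.
Proof. apply injective_projections; simpl; ring. Qed.

Lemma Cconj_1 : Cconj 1 = 1.
Proof. apply injective_projections; simpl; ring. Qed.

Lemma Cconj_neq0 (w : C) : w <> 0 -> Cconj w <> 0.
Proof. intros H E. apply H. rewrite <- (Cconj_conj w), E. apply Cconj_0. Qed.

Lemma Cmod_sub_sym (w w' : C) : Cmod (w - w') = Cmod (w' - w).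
Proof. rewrite <- Cmod_opp. f_equal. ring. Qed.

Lemma one_minus_neq0 (y : C) : Cmod y < 1 -> (1 - y)%C <> 0.
Proof.
  intros H E. assert (y = 1) by (rewrite <- (Cplus_0_l y), <- E; ring).
  subst. rewrite Cmod_1 in H. lra.
Qed.

Lemma Cmod_conj_mult_lt1 (w z : C) : Cmod w < 1 -> Cmod z < 1 -> Cmod (Cconj w * z) < 1.
Proof.
  intros. rewrite Cmod_mult, Cmod_conj.
  assert (0 <= Cmod w) by apply Cmod_ge_0. assert (0 <= Cmod z) by apply Cmod_ge_0. nra.
Qed.

Lemma ln_Cmod_div_mult (u d1 d2 : C) : u <> 0 -> d1 <> 0 -> d2 <> 0 ->
  ln (Cmod (u / (d1 * d2))) = ln (Cmod u) - ln (Cmod d1) - ln (Cmod d2).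
Proof.
  intros Hu H1 H2. rewrite Cmod_div, Cmod_mult by (apply Cmult_neq_0; auto).
  apply Cmod_gt_0 in Hu, H1, H2. unfold Rdiv.
  rewrite ln_mult, ln_Rinv, ln_mult; try lra; try apply Rmult_lt_0_compat; auto.
  apply Rinv_0_lt_compat, Rmult_lt_0_compat; auto.
Qed.

Lemma Cmod_thetaC (w : C) : w <> 0 -> Cmod (thetaC w) = / Cmod w.
Proof. intros H. unfold thetaC. rewrite Cmod_inv, Cmod_conj; auto. apply Cconj_neq0; auto. Qed.

Lemma theta_Some (w : C) : w <> 0 -> theta (Some w) = Some (thetaC w).
Proof. intros H. unfold theta. destruct Ceq_dec; [contradiction | reflexivity]. Qed.

Lemma theta_Some0 : theta (Some (RtoC 0)) = None.
Proof. unfold theta. destruct Ceq_dec; [reflexivity | congruence]. Qed.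

Lemma theta_Some_inj (w w' : C) : theta (Some w) = theta (Some w') -> w = w'.
Proof.
  unfold theta. destruct (Ceq_dec w 0), (Ceq_dec w' 0); intros E; try congruence.
  assert (Hinv : Cinv (Cconj w) = Cinv (Cconj w')) by (unfold thetaC in E; congruence).
  assert (Cconj w = Cconj w').
  { apply (f_equal Cinv) in Hinv.
    replace (Cconj w) with (Cinv (Cinv (Cconj w))) by (field; auto using Cconj_neq0).
    rewrite Hinv. field. auto using Cconj_neq0. }
  rewrite <- (Cconj_conj w), <- (Cconj_conj w'). congruence.
Qed.

Lemma ln_Cmod_thetaC_sub (w w' : C) : w <> 0 -> w' <> 0 -> w <> w' ->
  ln (Cmod (thetaC w - thetaC w')) = ln (Cmod (w - w')) - ln (Cmod w) - ln (Cmod w').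
Proof.
  intros Hw Hw' Hne.
  replace (thetaC w - thetaC w')%C with ((Cconj w' - Cconj w) / (Cconj w * Cconj w'))%C
    by (unfold thetaC; field; split; apply Cconj_neq0; auto).
  rewrite ln_Cmod_div_mult by (try rewrite <- Cminus_conj; auto using Cconj_neq0, Cminus_eq_contra).
  rewrite <- Cminus_conj, !Cmod_conj, (Cmod_sub_sym w'). ring.
Qed.

Lemma ln_Cmod_thetaC_sub_disk (w z : C) : w <> 0 -> Cmod w < 1 -> Cmod z < 1 ->
  ln (Cmod (thetaC w - z)) = ln (Cmod (1 - Cconj w * z)) - ln (Cmod w).
Proof.
  intros Hw Hw1 Hz1.
  replace (thetaC w - z)%C with ((1 - Cconj w * z) / (Cconj w * 1))%C
    by (unfold thetaC; field; apply Cconj_neq0; auto).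
  rewrite ln_Cmod_div_mult by (auto using Cconj_neq0, one_minus_neq0, Cmod_conj_mult_lt1;
                                intro E; injection E; lra).
  rewrite Cmod_conj, Cmod_1, ln_1. ring.
Qed.

Lemma ln_Cmod_sub_frac (c u u' : C) : (1 - c * u)%C <> 0 -> (1 - c * u')%C <> 0 -> u <> u' ->
  ln (Cmod (u / (1 - c * u) - u' / (1 - c * u'))) =
  ln (Cmod (u - u')) - ln (Cmod (1 - c * u)) - ln (Cmod (1 - c * u')).
Proof.
  intros Hd Hd' Hne.
  replace (u / (1 - c * u) - u' / (1 - c * u'))%C
    with ((u - u') / ((1 - c * u) * (1 - c * u')))%C by (field; auto).
  apply ln_Cmod_div_mult; auto using Cminus_eq_contra.
Qed.

Lemma ln_Cmod_sub_inv_shift (a z z' : C) : (z - a)%C <> 0 -> (z' - a)%C <> 0 -> z <> z' ->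
  ln (Cmod (/ (z - a) - / (z' - a))) = ln (Cmod (z - z')) - ln (Cmod (z - a)) - ln (Cmod (z' - a)).
Proof.
  intros Hd Hd' Hne.
  replace (/ (z - a) - / (z' - a))%C with ((z' - z) / ((z - a) * (z' - a)))%C by (field; auto).
  rewrite ln_Cmod_div_mult, (Cmod_sub_sym z') by auto using Cminus_eq_contra. ring.
Qed.

Lemma ln_Cmod_sub_frac_inv_shift (a w z : C) :
  (1 - a * Cconj w)%C <> 0 -> (z - a)%C <> 0 -> Cmod w < 1 -> Cmod z < 1 ->
  ln (Cmod (Cconj w / (1 - a * Cconj w) - / (z - a))) =
  ln (Cmod (1 - Cconj w * z)) - ln (Cmod (1 - a * Cconj w)) - ln (Cmod (z - a)).
Proof.
  intros Hd Hd' Hw Hz.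
  assert (Hn : (- (1 - Cconj w * z))%C <> 0).
  { intro E. apply (one_minus_neq0 (Cconj w * z)); [apply Cmod_conj_mult_lt1; auto|].
    replace (1 - Cconj w * z)%C with (- - (1 - Cconj w * z))%C by ring. rewrite E. ring. }
  replace (Cconj w / (1 - a * Cconj w) - / (z - a))%C
    with (- (1 - Cconj w * z) / ((1 - a * Cconj w) * (z - a)))%C by (field; auto).
  rewrite ln_Cmod_div_mult, Cmod_opp by auto. reflexivity.
Qed.

Lemma ForallOrdPairs_app {A} (R0 : A -> A -> Prop) l1 l2 :
  ForallOrdPairs R0 l1 -> ForallOrdPairs R0 l2 -> (forall x y, In x l1 -> In y l2 -> R0 x y) ->
  ForallOrdPairs R0 (l1 ++ l2).
Proof.
  induction 1 as [|a l1 Ha _ IH]; intros H2 H12; simpl; auto. constructor.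
  - apply Forall_app; split; auto. apply Forall_forall; intros; apply H12; simpl; auto.
  - apply IH; auto. intros; apply H12; simpl; auto.
Qed.

Lemma ForallOrdPairs_map {A B} (R0 : B -> B -> Prop) (f : A -> B) l :
  ForallOrdPairs (fun x y => R0 (f x) (f y)) l -> ForallOrdPairs R0 (map f l).
Proof. induction 1; simpl; constructor; auto. apply Forall_map; auto. Qed.

Lemma ForallOrdPairs_NoDup_map {A B} (R0 : A -> A -> Prop) (f : A -> B) l : NoDup (map f l) ->
  (forall a b, In a l -> In b l -> f a <> f b -> R0 a b) -> ForallOrdPairs R0 l.
Proof.
  induction l as [|a l IH]; intros Hn H; constructor; inversion Hn as [|? ? Ha Hl]; subst.
  - apply Forall_forall. intros b Hb. apply H; simpl; auto.
    intros E. apply Ha. rewrite E. apply in_map; auto.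
  - apply IH; auto. intros; apply H; simpl; auto.
Qed.

Lemma NoDup_map_transfer {A B1 B2} (g : A -> B1) (f : A -> B2) l : NoDup (map g l) ->
  (forall x y, In x l -> In y l -> f x = f y -> g x = g y) -> NoDup (map f l).
Proof.
  induction l as [|a l IH]; intros Hn H; simpl; constructor; inversion Hn as [|? ? Ha Hl]; subst.
  - intros Hi. apply in_map_iff in Hi as [x [Ex Hx]].
    apply Ha. rewrite (H a x); simpl; auto. apply in_map; auto.
  - apply IH; auto. intros; apply H; simpl; auto.
Qed.

Lemma all_finite_map {A} (f : A -> Z) (h : A -> C) l :
  all_finite (map (fun x => (f x, Some (h x))) l) = Some (map (fun x => (f x, h x)) l).
Proof. induction l; simpl; auto. rewrite IHl. reflexivity. Qed.

Lemma all_finite_None (l : symbol) k : In (k, None) l -> all_finite l = None.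
Proof.
  induction l as [|[k' [z|]] t IH]; intros H; simpl; destruct H; try congruence.
  rewrite IH; auto.
Qed.

Lemma fold_Zadd_app l1 l2 :
  fold_right Z.add 0%Z (l1 ++ l2) = (fold_right Z.add 0 l1 + fold_right Z.add 0 l2)%Z.
Proof. induction l1; simpl; lia. Qed.

Lemma fold_Zadd_opp l : fold_right Z.add 0%Z (map Z.opp l) = (- fold_right Z.add 0 l)%Z.
Proof. induction l; simpl; lia. Qed.

(* [zval] is junk on [None]; it is only used on symbols with all points in [B_0]. *)
Definition zval (p : Z * pt) : C := match snd p with Some z => z | None => RtoC 0 end.

Definition B0_symbol (Zs : symbol) : Prop :=
  distinct_pts Zs /\ List.Forall (fun kp => in_B0 (snd kp)) Zs.

Definition charge (Zs : symbol) : Z := fold_right Z.add 0%Z (map fst Zs).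

Lemma B0_symbol_pt Zs p : B0_symbol Zs -> In p Zs -> snd p = Some (zval p) /\ Cmod (zval p) < 1.
Proof.
  intros [_ H] Hp. rewrite Forall_forall in H. specialize (H p Hp).
  unfold zval. destruct (snd p); simpl in *; auto. contradiction.
Qed.

Lemma B0_symbol_map Zs : B0_symbol Zs -> Zs = map (fun p => (fst p, Some (zval p))) Zs.
Proof.
  intros H. rewrite <- (map_id Zs) at 1. apply map_ext_in. intros [k z] Hp.
  destruct (B0_symbol_pt _ _ H Hp) as [E _]. simpl in *. rewrite E. reflexivity.
Qed.

Lemma B0_symbol_ForallOrdPairs (R0 : Z * pt -> Z * pt -> Prop) Zs : B0_symbol Zs ->
  (forall p q, In p Zs -> In q Zs -> zval p <> zval q -> R0 p q) -> ForallOrdPairs R0 Zs.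
Proof.
  intros HZ H. apply (ForallOrdPairs_NoDup_map R0 snd); [apply HZ|].
  intros a b Ha Hb E. apply H; auto. intros E2. apply E.
  rewrite (proj1 (B0_symbol_pt _ _ HZ Ha)), (proj1 (B0_symbol_pt _ _ HZ Hb)), E2. reflexivity.
Qed.

Lemma Theta_sym_B0 Z1 : B0_symbol Z1 ->
  Theta_sym Z1 = map (fun p => (Z.opp (fst p), theta (Some (zval p)))) Z1.
Proof.
  intros H. unfold Theta_sym. apply map_ext_in. intros p Hp.
  rewrite (proj1 (B0_symbol_pt _ _ H Hp)). reflexivity.
Qed.

(* Reflected points lie outside the closed unit disk (or at infinity). *)
Lemma distinct_pts_reflect Z1 Z2 : B0_symbol Z1 -> B0_symbol Z2 ->
  distinct_pts (Theta_sym Z1 ++ Z2).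
Proof.
  intros H1 H2. unfold distinct_pts. rewrite Theta_sym_B0, map_app, map_map by auto.
  apply NoDup_app; [| apply H2 |].
  - apply (NoDup_map_transfer snd); [apply H1|].
    intros x y Hx Hy E. apply theta_Some_inj in E.
    rewrite (proj1 (B0_symbol_pt _ _ H1 Hx)), (proj1 (B0_symbol_pt _ _ H1 Hy)), E. reflexivity.
  - intros a Ha Hb. apply in_map_iff in Ha as [p [Ep Hp]]. apply in_map_iff in Hb as [q [Eq Hq]].
    destruct (B0_symbol_pt _ _ H1 Hp) as [_ Hw]. destruct (B0_symbol_pt _ _ H2 Hq) as [Es Hz].
    rewrite Es in Eq. rewrite <- Eq in Ep. simpl in Ep. unfold theta in Ep.
    destruct (Ceq_dec (zval p) 0) as [e|e]; [congruence|].
    injection Ep as Ep. rewrite <- Ep, Cmod_thetaC in Hz by auto.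
    assert (0 < Cmod (zval p)) by (apply Cmod_gt_0; auto).
    assert (1 < / Cmod (zval p)) by (rewrite <- Rinv_1; apply Rinv_lt_contravar; lra).
    lra.
Qed.

Definition self_energy (s : C -> R) (Zs : symbol) : R :=
  log_energy s (map (fun p => (fst p, zval p)) Zs).

Definition cross_energy (Z1 Z2 : symbol) : R :=
  lsum (fun p => lsum (fun q => - (IZR (fst p) * IZR (fst q)) / (2 * PI) *
                                ln (Cmod (1 - Cconj (zval p) * zval q))) Z2) Z1.

Definition refl_kernel (g : sphere_metric) (Z1 Z2 : symbol) : R :=
  if Z.eq_dec (charge Z1) (charge Z2)
  then exp (self_energy (sigma g) Z1 + self_energy (sigma g) Z2 + cross_energy Z1 Z2)
  else 0.

(* The points of [Theta_sym Z1 ++ Z2] recorded before reflecting: charge, point of [B_0],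
   and [true] for the points of [Theta_sym Z1]. *)
Definition doubled (Z1 Z2 : symbol) : list (Z * C * bool) :=
  map (fun p => (fst p, zval p, true)) Z1 ++ map (fun p => (fst p, zval p, false)) Z2.

Definition dcharge (x : Z * C * bool) : Z := if snd x then Z.opp (fst (fst x)) else fst (fst x).
Definition dpoint (x : Z * C * bool) : C := snd (fst x).

(* The log-distance of a doubled pair with the conformal factors removed. *)
Definition dlog (x y : Z * C * bool) : R :=
  match snd x, snd y with
  | true, true | false, false => ln (Cmod (dpoint x - dpoint y))
  | true, false => ln (Cmod (1 - Cconj (dpoint x) * dpoint y))
  | false, true => ln (Cmod (1 - Cconj (dpoint y) * dpoint x))
  end.

Lemma doubled_energy (s : C -> R) Z1 Z2 :
  -(1 / (8 * PI)) * lsum (fun p => IZR (dcharge p) ^ 2 * s (dpoint p)) (doubled Z1 Z2)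
  + pair_sum (fun p q => IZR (dcharge p) * IZR (dcharge q) / (2 * PI) * dlog p q) (doubled Z1 Z2)
  = self_energy s Z1 + self_energy s Z2 + cross_energy Z1 Z2.
Proof.
  unfold doubled, self_energy, log_energy, cross_energy.
  rewrite lsum_app, pair_sum_app, !lsum_map, !pair_sum_map.
  rewrite (lsum_ext (fun x => lsum _ _) (fun p => lsum (fun q => - (IZR (fst p) * IZR (fst q)) /
             (2 * PI) * ln (Cmod (1 - Cconj (zval p) * zval q))) Z2)).
  2:{ intros x Hx. rewrite lsum_map. apply lsum_ext. intros y Hy.
      unfold dcharge, dlog, dpoint; simpl. rewrite !opp_IZR. field. apply PI_neq0. }
  rewrite (pair_sum_ext (fun x y => IZR (dcharge (fst x, zval x, true)) * _ / _ * _)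
             (fun p q => IZR (fst p) * IZR (fst q) / (2 * PI) * ln (Cmod (zval p - zval q)))).
  2:{ intros. unfold dcharge, dlog, dpoint; simpl. rewrite !opp_IZR. field. apply PI_neq0. }
  rewrite (lsum_ext (fun x => IZR (dcharge (fst x, zval x, true)) ^ 2 * _)
             (fun p => IZR (fst p) ^ 2 * s (zval p))).
  2:{ intros. unfold dcharge, dpoint; simpl. rewrite !opp_IZR. ring. }
  unfold dcharge, dlog, dpoint; simpl. ring.
Qed.

Lemma doubled_ForallOrdPairs (Rel : Z * C * bool -> Z * C * bool -> Prop) Z1 Z2 :
  B0_symbol Z1 -> B0_symbol Z2 ->
  (forall p q, In p Z1 -> In q Z1 -> zval p <> zval q -> Rel (fst p, zval p, true) (fst q, zval q, true)) ->
  (forall p q, In p Z2 -> In q Z2 -> zval p <> zval q -> Rel (fst p, zval p, false) (fst q, zval q, false)) ->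
  (forall p q, In p Z1 -> In q Z2 -> Rel (fst p, zval p, true) (fst q, zval q, false)) ->
  ForallOrdPairs Rel (doubled Z1 Z2).
Proof.
  intros H1 H2 H11 H22 H12. unfold doubled. apply ForallOrdPairs_app.
  - apply ForallOrdPairs_map, B0_symbol_ForallOrdPairs; auto.
  - apply ForallOrdPairs_map, B0_symbol_ForallOrdPairs; auto.
  - intros x y Hx Hy. apply in_map_iff in Hx as [p [<- Hp]]. apply in_map_iff in Hy as [q [<- Hq]].
    auto.
Qed.

Lemma doubled_Forall (P : Z * C * bool -> Prop) Z1 Z2 :
  (forall p, In p Z1 -> P (fst p, zval p, true)) -> (forall q, In q Z2 -> P (fst q, zval q, false)) ->
  List.Forall P (doubled Z1 Z2).
Proof.
  intros H1 H2. unfold doubled. apply Forall_app.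
  split; apply Forall_forall; intros x Hx; apply in_map_iff in Hx as [p [<- Hp]]; auto.
Qed.

Lemma doubled_charge Z1 Z2 :
  fold_right Z.add 0%Z (map dcharge (doubled Z1 Z2)) = (charge Z2 - charge Z1)%Z.
Proof.
  unfold doubled, charge. rewrite map_app, fold_Zadd_app, !map_map. unfold dcharge; simpl.
  rewrite <- (map_map fst Z.opp), fold_Zadd_opp.
  change (map (fun x : Z * pt => fst x) Z2) with (map fst Z2). lia.
Qed.

Lemma E_fin_doubled (g : sphere_metric) s (pos : Z * C * bool -> C) (L : Z * C * bool -> R) Z1 Z2 :
  ForallOrdPairs (fun p q => ln (Cmod (pos p - pos q)) = dlog p q + L p + L q) (doubled Z1 Z2) ->
  List.Forall (fun p => s (pos p) = sigma g (dpoint p) - 4 * L p) (doubled Z1 Z2) ->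
  E_fin s (map (fun x => (dcharge x, pos x)) (doubled Z1 Z2)) = refl_kernel g Z1 Z2.
Proof.
  intros Hlog Hs. rewrite E_fin_log_energy, map_map. simpl.
  change (map (fun x => dcharge x) (doubled Z1 Z2)) with (map dcharge (doubled Z1 Z2)).
  rewrite doubled_charge. unfold refl_kernel.
  destruct (Z.eq_dec (charge Z1) (charge Z2)), (Z.eq_dec (charge Z2 - charge Z1) 0); try lia; auto.
  f_equal. rewrite <- (doubled_energy (sigma g)).
  apply (log_energy_conformal (doubled Z1 Z2) dcharge pos s (fun p => sigma g (dpoint p)) L dlog); auto.
  rewrite <- IZR_fold_Zadd, doubled_charge. replace (charge Z2 - charge Z1)%Z with 0%Z by lia.
  reflexivity.
Qed.

Lemma E_sym_reflect_off_origin g Z1 Z2 : reflection_invariant g -> B0_symbol Z1 -> B0_symbol Z2 ->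
  (forall p, In p Z1 -> zval p <> 0) -> E_sym g (Theta_sym Z1 ++ Z2) = refl_kernel g Z1 Z2.
Proof.
  intros Hinv H1 H2 Hnz. unfold E_sym.
  destruct (excluded_middle_informative _) as [_|n]; [|exfalso; apply n, distinct_pts_reflect; auto].
  set (pos := fun x : Z * C * bool => if snd x then thetaC (dpoint x) else dpoint x).
  assert (Hsym : Theta_sym Z1 ++ Z2 = map (fun x => (dcharge x, Some (pos x))) (doubled Z1 Z2)).
  { rewrite Theta_sym_B0, (B0_symbol_map Z2) at 1 by auto. unfold doubled.
    rewrite map_app, !map_map. f_equal; apply map_ext_in; intros p Hp; auto.
    rewrite theta_Some by auto. reflexivity. }
  rewrite Hsym, all_finite_map.
  apply E_fin_doubled with (L := fun x : Z * C * bool => if snd x then - ln (Cmod (dpoint x)) else 0).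
  - apply doubled_ForallOrdPairs; auto; intros p q Hp Hq; unfold pos, dlog, dpoint; simpl.
    + intros Hne. rewrite ln_Cmod_thetaC_sub by auto. ring.
    + intros _. ring.
    + destruct (B0_symbol_pt _ _ H1 Hp) as [_ Hw]. destruct (B0_symbol_pt _ _ H2 Hq) as [_ Hz].
      rewrite ln_Cmod_thetaC_sub_disk by auto. ring.
  - apply doubled_Forall; intros p Hp; unfold pos, dpoint; simpl; [|ring].
    rewrite (proj1 Hinv (zval p)) by auto. ring.
Qed.

Definition pt_abs (kp : Z * pt) : R := match snd kp with Some z => Cmod z | None => 0 end.

(* The pole [a] of the Moebius chart chosen by [E_sym] keeps every reflected point at a finite place. *)
Lemma choose_a_reflect Z1 Z2 : B0_symbol Z1 -> B0_symbol Z2 ->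
  let A := 1 + lsum pt_abs (Theta_sym Z1 ++ Z2) in
  (forall p, In p Z1 -> (1 - A * Cconj (zval p))%C <> 0) /\
  (forall q, In q Z2 -> (zval q - A)%C <> 0).
Proof.
  intros H1 H2 A.
  assert (Hge : forall y, In y (Theta_sym Z1 ++ Z2) -> 0 <= pt_abs y)
    by (intros [k [z|]] _; unfold pt_abs; simpl; [apply Cmod_ge_0 | lra]).
  assert (HA : 1 <= A) by (assert (0 <= lsum pt_abs (Theta_sym Z1 ++ Z2)) by (apply lsum_ge0; auto);
                           unfold A; lra).
  split.
  - intros p Hp E. destruct (Ceq_dec (zval p) 0) as [e|e].
    { rewrite e, Cconj_0 in E. apply R1_neq_R0. injection E. lra. }
    assert (Hinv : / Cmod (zval p) <= lsum pt_abs (Theta_sym Z1 ++ Z2)).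
    { rewrite <- (Cmod_thetaC _ e).
      change (Cmod (thetaC (zval p))) with (pt_abs (Z.opp (fst p), Some (thetaC (zval p)))).
      apply lsum_ge_term; auto. rewrite Theta_sym_B0 by auto. apply in_or_app; left.
      rewrite <- theta_Some by auto.
      apply (in_map (fun p => (Z.opp (fst p), theta (Some (zval p))))). auto. }
    assert (H1' : (A * Cconj (zval p))%C = 1) by (rewrite <- (Cplus_0_r (A * _)), <- E; ring).
    apply (f_equal Cmod) in H1'.
    rewrite Cmod_mult, Cmod_R, Cmod_conj, Cmod_1, Rabs_pos_eq in H1' by lra.
    assert (0 < Cmod (zval p)) by (apply Cmod_gt_0; auto).
    assert (1 < A * Cmod (zval p)); [|lra].
    apply (Rmult_le_compat_r (Cmod (zval p))) in Hinv; [|lra].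
    rewrite Rinv_l in Hinv by lra. unfold A. nra.
  - intros q Hq E. destruct (B0_symbol_pt _ _ H2 Hq) as [_ Hz].
    assert (zval q = A) by (rewrite <- (Cplus_0_l A), <- E; ring).
    rewrite H, Cmod_R, Rabs_pos_eq in Hz; lra.
Qed.

Lemma beta_inv_theta (a w : C) : (1 - a * Cconj w)%C <> 0 ->
  beta_inv a (theta (Some w)) = (Cconj w / (1 - a * Cconj w))%C.
Proof.
  intros Hd. destruct (Ceq_dec w 0) as [->|e].
  - rewrite theta_Some0, Cconj_0. simpl. unfold Cdiv. ring.
  - rewrite theta_Some by auto. simpl. unfold thetaC. field. auto using Cconj_neq0.
Qed.

Lemma pull_sigma_reflected g (a w : C) : reflection_invariant g -> (1 - a * Cconj w)%C <> 0 ->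
  pull_sigma g a (Cconj w / (1 - a * Cconj w)) = sigma g w + 4 * ln (Cmod (1 - a * Cconj w)).
Proof.
  intros Hinv Hd. unfold pull_sigma. destruct (Ceq_dec w 0) as [->|e].
  - rewrite Cconj_0. replace (0 / (1 - a * 0))%C with (RtoC 0) by (unfold Cdiv; ring).
    destruct Ceq_dec; [|congruence]. rewrite (proj2 Hinv).
    replace (1 - a * 0)%C with (RtoC 1) by ring. rewrite Cmod_1, ln_1. ring.
  - assert (Hc := Cconj_neq0 _ e).
    destruct Ceq_dec as [E|_].
    { exfalso. apply Hc. replace (Cconj w) with (Cconj w / (1 - a * Cconj w) * (1 - a * Cconj w))%C
        by (field; auto). rewrite E. ring. }
    replace (a + / (Cconj w / (1 - a * Cconj w)))%C with (thetaC w) by (unfold thetaC; field; auto).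
    rewrite (proj1 Hinv w e), Cmod_div, Cmod_conj by auto.
    apply Cmod_gt_0 in e, Hd. unfold Rdiv. rewrite ln_mult, ln_Rinv; auto.
    + ring.
    + apply Rinv_0_lt_compat; auto.
Qed.

Lemma pull_sigma_plane g (a z : C) : (z - a)%C <> 0 ->
  pull_sigma g a (/ (z - a)) = sigma g z + 4 * ln (Cmod (z - a)).
Proof.
  intros Hd. unfold pull_sigma. destruct Ceq_dec as [E|_].
  { exfalso. apply R1_neq_R0. assert (H := f_equal (Cmult (z - a)) E).
    rewrite Cinv_r in H by auto. replace ((z - a) * 0)%C with (RtoC 0) in H by ring.
    injection H. lra. }
  replace (a + / / (z - a))%C with z by (field; auto).
  rewrite Cmod_inv, ln_Rinv by (auto; apply Cmod_gt_0; auto). ring.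
Qed.

Lemma E_sym_reflect_origin g Z1 Z2 : reflection_invariant g -> B0_symbol Z1 -> B0_symbol Z2 ->
  (exists p, In p Z1 /\ zval p = 0) -> E_sym g (Theta_sym Z1 ++ Z2) = refl_kernel g Z1 Z2.
Proof.
  intros Hinv H1 H2 [p0 [Hp0 Hz0]]. unfold E_sym.
  destruct (excluded_middle_informative _) as [_|n]; [|exfalso; apply n, distinct_pts_reflect; auto].
  rewrite (all_finite_None _ (Z.opp (fst p0))).
  2:{ rewrite Theta_sym_B0 by auto. apply in_or_app; left. rewrite <- theta_Some0, <- Hz0.
      apply (in_map (fun p => (Z.opp (fst p), theta (Some (zval p))))). auto. }
  destruct (choose_a_reflect Z1 Z2 H1 H2) as [HAw HAz].
  change (choose_a (Theta_sym Z1 ++ Z2)) with (RtoC (1 + lsum pt_abs (Theta_sym Z1 ++ Z2))).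
  set (A := 1 + lsum pt_abs (Theta_sym Z1 ++ Z2)) in *.
  set (pos := fun x : Z * C * bool => if snd x
                then (Cconj (dpoint x) / (1 - A * Cconj (dpoint x)))%C else (/ (dpoint x - A))%C).
  assert (Hsym : map (fun kp => (fst kp, beta_inv A (snd kp))) (Theta_sym Z1 ++ Z2) =
                 map (fun x => (dcharge x, pos x)) (doubled Z1 Z2)).
  { rewrite Theta_sym_B0, (B0_symbol_map Z2) at 1 by auto. unfold doubled.
    rewrite !map_app, !map_map. f_equal; apply map_ext_in; intros p Hp; auto.
    cbn [fst snd]. rewrite beta_inv_theta by auto. reflexivity. }
  cbv zeta. rewrite Hsym.
  apply E_fin_doubled with (L := fun x : Z * C * bool => if snd x
      then - ln (Cmod (1 - A * Cconj (dpoint x))) else - ln (Cmod (dpoint x - A))).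
  - apply doubled_ForallOrdPairs; auto; intros p q Hp Hq; unfold pos, dlog, dpoint; simpl.
    + intros Hne.
      assert (Cconj (zval p) <> Cconj (zval q))
        by (intro E; apply Hne; rewrite <- (Cconj_conj (zval p)), E; apply Cconj_conj).
      rewrite ln_Cmod_sub_frac, <- Cminus_conj, Cmod_conj by auto. ring.
    + intros Hne. rewrite ln_Cmod_sub_inv_shift by auto. ring.
    + destruct (B0_symbol_pt _ _ H1 Hp) as [_ Hw]. destruct (B0_symbol_pt _ _ H2 Hq) as [_ Hz].
      rewrite ln_Cmod_sub_frac_inv_shift by auto. ring.
  - apply doubled_Forall; intros p Hp; unfold pos, dpoint; simpl.
    + rewrite pull_sigma_reflected by auto. ring.
    + rewrite pull_sigma_plane by auto. ring.
Qed.

Lemma E_sym_reflect g Z1 Z2 : reflection_invariant g -> B0_symbol Z1 -> B0_symbol Z2 ->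
  E_sym g (Theta_sym Z1 ++ Z2) = refl_kernel g Z1 Z2.
Proof.
  intros Hinv H1 H2.
  destruct (excluded_middle_informative (exists p, In p Z1 /\ zval p = 0)) as [H|H].
  - apply E_sym_reflect_origin; auto.
  - apply E_sym_reflect_off_origin; auto. intros p Hp E. apply H. exists p; auto.
Qed.

(** * Positive semidefiniteness of the reflection kernel *)

Lemma Re_conj_mult (u v : C) : Re (Cconj u * v) = Re u * Re v + Im u * Im v.
Proof. destruct u, v. unfold Re, Im; simpl. ring. Qed.

Lemma Im_conj_mult (u v : C) : Im (Cconj u * v) = Re u * Im v - Im u * Re v.
Proof. destruct u, v. unfold Re, Im; simpl. ring. Qed.

Lemma cross_energy_sym Z1 Z2 : cross_energy Z1 Z2 = cross_energy Z2 Z1.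
Proof.
  unfold cross_energy. rewrite lsum_exchange. apply lsum_ext; intros q _; apply lsum_ext; intros p _.
  replace (Cmod (1 - Cconj (zval q) * zval p)) with (Cmod (1 - Cconj (zval p) * zval q)).
  - field. apply PI_neq0.
  - rewrite <- (Cmod_conj (1 - Cconj (zval p) * zval q)).
    rewrite Cminus_conj, Cmult_conj, Cconj_conj, Cconj_1. f_equal. ring.
Qed.

Lemma refl_kernel_sym g Z1 Z2 : refl_kernel g Z1 Z2 = refl_kernel g Z2 Z1.
Proof.
  unfold refl_kernel. rewrite cross_energy_sym.
  destruct (Z.eq_dec (charge Z1) (charge Z2)), (Z.eq_dec (charge Z2) (charge Z1)); try lia; auto.
  f_equal. ring.
Qed.

Definition log_weight (n : nat) : R := / (2 * PI * INR (S n)).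
Definition moment_re (n : nat) (Zs : symbol) : R := lsum (fun p => IZR (fst p) * Re (Cpow (zval p) (S n))) Zs.
Definition moment_im (n : nat) (Zs : symbol) : R := lsum (fun p => IZR (fst p) * Im (Cpow (zval p) (S n))) Zs.

Lemma log_weight_ge0 n : 0 <= log_weight n.
Proof.
  left. apply Rinv_0_lt_compat, Rmult_lt_0_compat; [|apply lt_0_INR; lia].
  apply Rmult_lt_0_compat; [lra | apply PI_RGT_0].
Qed.

Lemma lsum_product {A B} (f : A -> R) (h : B -> R) l1 l2 :
  lsum (fun x => lsum (fun y => f x * h y) l2) l1 = lsum f l1 * lsum h l2.
Proof.
  rewrite (lsum_ext _ (fun x => lsum h l2 * f x)), lsum_scal; [ring|].
  intros x _. rewrite Rmult_comm, <- lsum_scal. apply lsum_ext; intros; ring.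
Qed.

(* Expanding [-ln |1 - conj w z| = sum_(n >= 1) Re (conj w^n * z^n) / n] separates the points of [Z1] from those of [Z2]. *)
Lemma nsum_moments Z1 Z2 N :
  nsum (fun n => log_weight n * (moment_re n Z1 * moment_re n Z2 + moment_im n Z1 * moment_im n Z2)) N =
  lsum (fun p => lsum (fun q => IZR (fst p) * IZR (fst q) / (2 * PI) *
    nsum (fun n => Re (Cpow (Cconj (zval p) * zval q) (S n)) / INR (S n)) N) Z2) Z1.
Proof.
  rewrite (lsum_ext _ (fun p => nsum (fun n => lsum (fun q => IZR (fst p) * IZR (fst q) / (2 * PI) *
             (Re (Cpow (Cconj (zval p) * zval q) (S n)) / INR (S n))) Z2) N)).
  2:{ intros p _. rewrite <- lsum_nsum. apply lsum_ext; intros q _. symmetry. apply nsum_scal. }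
  rewrite lsum_nsum. apply nsum_ext. intros n _.
  set (c := log_weight n).
  rewrite (lsum_ext _ (fun p => lsum (fun q => (c * (IZR (fst p) * Re (Cpow (zval p) (S n)))) *
                                                (IZR (fst q) * Re (Cpow (zval q) (S n)))) Z2 +
                                lsum (fun q => (c * (IZR (fst p) * Im (Cpow (zval p) (S n)))) *
                                                (IZR (fst q) * Im (Cpow (zval q) (S n)))) Z2)).
  2:{ intros p _. rewrite <- lsum_plus. apply lsum_ext; intros q _.
      rewrite Cpow_mult_l, <- Cpow_conj, Re_conj_mult. unfold c, log_weight.
      field. split; [apply not_0_INR; lia | apply PI_neq0]. }
  rewrite lsum_plus, !lsum_product, !lsum_scal. unfold moment_re, moment_im. ring.
Qed.

Lemma is_lim_seq_cross_energy Z1 Z2 : B0_symbol Z1 -> B0_symbol Z2 ->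
  is_lim_seq (fun N => nsum (fun n => log_weight n *
                (moment_re n Z1 * moment_re n Z2 + moment_im n Z1 * moment_im n Z2)) N)
             (cross_energy Z1 Z2).
Proof.
  intros H1 H2. eapply is_lim_seq_ext; [intros N; symmetry; apply nsum_moments|].
  unfold cross_energy. apply is_lim_seq_lsum; intros p Hp. apply is_lim_seq_lsum; intros q Hq.
  destruct (B0_symbol_pt _ _ H1 Hp) as [_ Hw]. destruct (B0_symbol_pt _ _ H2 Hq) as [_ Hz].
  replace (- (IZR (fst p) * IZR (fst q)) / (2 * PI) * ln (Cmod (1 - Cconj (zval p) * zval q)))
    with (IZR (fst p) * IZR (fst q) / (2 * PI) * - ln (Cmod (1 - Cconj (zval p) * zval q)))
    by (field; apply PI_neq0).
  apply (is_lim_seq_scal_l _ _ (Finite _)), is_lim_seq_neglog, Cmod_conj_mult_lt1; auto.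
Qed.

Lemma refl_kernel_psd g : psd_on B0_symbol (refl_kernel g).
Proof.
  assert (Hcross : psd_on B0_symbol (fun a b => exp (cross_energy a b))).
  { apply (psd_on_lim _ (fun N a b => exp (nsum (fun n => log_weight n *
             (moment_re n a * moment_re n b + moment_im n a * moment_im n b)) N))).
    - intros N. apply psd_on_exp_nsum, log_weight_ge0.
    - intros a b Ha Hb. apply is_lim_seq_continuous.
      + apply derivable_continuous_pt, derivable_pt_exp.
      + apply is_lim_seq_cross_energy; auto. }
  intros l y Hl.
  rewrite (quad_form_ext _ (fun a b => if Z.eq_dec (charge a) (charge b) then
             exp (self_energy (sigma g) a) * exp (self_energy (sigma g) b) * exp (cross_energy a b)
           else 0)).
  - exact (psd_on_indicator Z.eq_dec _ _ charge (psd_on_rescale _ _ _ Hcross) l y Hl).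
  - intros a b _ _. unfold refl_kernel. destruct Z.eq_dec; auto. rewrite <- !exp_plus. reflexivity.
Qed.

Lemma csum_cons {A} (f : A -> C) x l : csum f (x :: l) = (f x + csum f l)%C.
Proof. reflexivity. Qed.

Lemma csum_ext {A} (f g : A -> C) l : (forall x, In x l -> f x = g x) -> csum f l = csum g l.
Proof.
  induction l as [|x l IH]; intros H; auto.
  rewrite !csum_cons, H, IH; simpl; auto. intros; apply H; simpl; auto.
Qed.

Lemma csum_eq0 {A} (f : A -> C) l : (forall x, In x l -> f x = 0) -> csum f l = 0.
Proof.
  induction l as [|x l IH]; intros H; auto.
  rewrite csum_cons, IH by (intros; apply H; simpl; auto).
  rewrite H; simpl; auto. ring.
Qed.

Lemma csum_plus {A} (f g : A -> C) l : csum (fun x => f x + g x)%C l = (csum f l + csum g l)%C.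
Proof. induction l; [unfold csum; simpl; ring|]. rewrite !csum_cons, IHl. ring. Qed.

Lemma csum_scal {A} (f : A -> C) c l : csum (fun x => c * f x)%C l = (c * csum f l)%C.
Proof. induction l; [unfold csum; simpl; ring|]. rewrite !csum_cons, IHl. ring. Qed.

Lemma csum_app {A} (f : A -> C) l1 l2 : csum f (l1 ++ l2) = (csum f l1 + csum f l2)%C.
Proof. induction l1; [unfold csum; simpl; ring|]. simpl. rewrite !csum_cons, IHl1. ring. Qed.

Lemma csum_map {A B} (f : B -> C) (g : A -> B) l : csum f (map g l) = csum (fun x => f (g x)) l.
Proof. unfold csum. rewrite map_map. reflexivity. Qed.

Lemma csum_flat_map {A B} (f : B -> C) (g : A -> list B) l :
  csum f (flat_map g l) = csum (fun x => csum f (g x)) l.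
Proof. induction l; auto. simpl. rewrite csum_app, IHl. reflexivity. Qed.

Lemma csum_exchange {A B} (f : A -> B -> C) l1 l2 :
  csum (fun x => csum (f x) l2) l1 = csum (fun y => csum (fun x => f x y) l1) l2.
Proof.
  induction l1 as [|x l1 IH].
  - symmetry; apply csum_eq0; reflexivity.
  - rewrite csum_cons, IH, <- csum_plus. apply csum_ext; intros; rewrite csum_cons; reflexivity.
Qed.

Lemma csum_filter {A} (f : A -> C) (p : A -> bool) l :
  (forall x, In x l -> p x = false -> f x = 0) -> csum f l = csum f (filter p l).
Proof.
  induction l as [|x l IH]; intros H; simpl; auto. destruct (p x) eqn:E.
  - rewrite !csum_cons, IH; auto. intros; apply H; simpl; auto.
  - rewrite csum_cons, H, IH; simpl; auto; [ring|]. intros; apply H; simpl; auto.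
Qed.

Lemma csum_indicator {B} (eq_dec : forall x y : B, {x = y} + {x <> y}) (V : list B) u (f : B -> C) :
  NoDup V -> In u V -> csum (fun v => if eq_dec u v then f v else 0) V = f u.
Proof.
  induction V as [|a V IH]; intros Hn Hi; [destruct Hi|]. inversion Hn; subst.
  rewrite csum_cons. destruct (eq_dec u a) as [<-|Hne].
  - rewrite csum_eq0; [ring|]. intros x Hx. destruct (eq_dec u x); subst; tauto.
  - destruct Hi; [congruence|]. rewrite IH; auto. ring.
Qed.

Lemma Re_csum {A} (f : A -> C) l : Re (csum f l) = lsum (fun x => Re (f x)) l.
Proof. induction l; auto. rewrite csum_cons, lsum_cons, <- IHl. reflexivity. Qed.

Lemma Im_csum {A} (f : A -> C) l : Im (csum f l) = lsum (fun x => Im (f x)) l.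
Proof. induction l; auto. rewrite csum_cons, lsum_cons, <- IHl. reflexivity. Qed.

(* Collecting the terms of a formal sum by symbol, for any additive [phi] (the identity or [Cconj]). *)
Lemma csum_by_symbol (phi : C -> C) (Hphi : forall x y, phi (x + y)%C = (phi x + phi y)%C)
  (h : symbol -> C) (F : formal) :
  csum (fun cz => phi (fst cz) * h (snd cz))%C F =
  csum (fun Zs => phi (coef F Zs) * h Zs)%C (nodup sym_eq_dec (map snd F)).
Proof.
  assert (H0 : phi 0 = 0).
  { assert (E := Hphi 0 0). rewrite Cplus_0_l in E.
    replace (phi 0) with (phi 0 + phi 0 - phi 0)%C by ring. rewrite <- E. ring. }
  assert (Hcoef : forall Zs, phi (coef F Zs) =
            csum (fun cz => if sym_eq_dec (snd cz) Zs then phi (fst cz) else 0) F).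
  { intros Zs. induction F as [|cz F IH]; [exact H0|].
    change (coef (cz :: F) Zs) with
      ((if sym_eq_dec (snd cz) Zs then fst cz else 0) + coef F Zs)%C.
    rewrite Hphi, IH, csum_cons. destruct sym_eq_dec; auto. rewrite H0. reflexivity. }
  rewrite (csum_ext _ (fun Zs => csum (fun cz =>
             if sym_eq_dec (snd cz) Zs then phi (fst cz) * h Zs else 0)%C F)).
  2:{ intros Zs _. rewrite Hcoef, Cmult_comm, <- csum_scal. apply csum_ext; intros.
      destruct sym_eq_dec; ring. }
  rewrite csum_exchange. apply csum_ext. intros cz Hcz.
  rewrite (csum_indicator sym_eq_dec _ (snd cz) (fun Zs => phi (fst cz) * h Zs)%C); auto.
  - apply NoDup_nodup.
  - apply nodup_In, in_map; auto.
Qed.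

Lemma E_csum g G : E g G = csum (fun cz => fst cz * RtoC (E_sym g (snd cz)))%C G.
Proof.
  unfold E. symmetry.
  apply (csum_by_symbol (fun x => x) (fun x y => eq_refl) (fun Zs => RtoC (E_sym g Zs))).
Qed.

Definition support (F : formal) : list symbol :=
  filter (fun Zs => if Ceq_dec (coef F Zs) 0 then false else true) (nodup sym_eq_dec (map snd F)).

Lemma in_support F Zs : In Zs (support F) -> coef F Zs <> 0.
Proof. unfold support. rewrite filter_In. intros [_ H]. destruct Ceq_dec; [discriminate | auto]. Qed.

Lemma csum_support F (f : symbol -> C) : (forall Zs, coef F Zs = 0 -> f Zs = 0) ->
  csum f (nodup sym_eq_dec (map snd F)) = csum f (support F).
Proof. intros H. apply csum_filter. intros Zs _. destruct Ceq_dec; [auto | discriminate]. Qed.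

Lemma E_mul_Theta g F : E g (mul_formal (Theta F) F) =
  csum (fun Z1 => Cconj (coef F Z1) *
     csum (fun Z2 => coef F Z2 * RtoC (E_sym g (Theta_sym Z1 ++ Z2))) (support F))%C (support F).
Proof.
  rewrite E_csum. unfold mul_formal. rewrite csum_flat_map. unfold Theta. rewrite csum_map.
  rewrite (csum_ext _ (fun cz1 => Cconj (fst cz1) * csum (fun Zs => coef F Zs *
             RtoC (E_sym g (Theta_sym (snd cz1) ++ Zs))) (nodup sym_eq_dec (map snd F)))%C).
  - rewrite (csum_by_symbol Cconj Cplus_conj (fun Z1 => csum (fun Zs => coef F Zs *
               RtoC (E_sym g (Theta_sym Z1 ++ Zs))) (nodup sym_eq_dec (map snd F)))%C).
    rewrite csum_support by (intros Z1 ->; rewrite Cconj_0; ring).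
    apply csum_ext; intros Z1 _. f_equal. apply csum_support. intros Z2 ->. ring.
  - intros cz1 _. rewrite csum_map. simpl.
    rewrite <- (csum_by_symbol (fun x => x) (fun x y => eq_refl)
                  (fun Zs => RtoC (E_sym g (Theta_sym (snd cz1) ++ Zs)))).
    rewrite <- csum_scal. apply csum_ext; intros. rewrite Cmult_assoc. reflexivity.
Qed.

Lemma csum_hermitian_form {A} (K : A -> A -> R) (d : A -> C) l :
  (forall a b, In a l -> In b l -> K a b = K b a) ->
  Im (csum (fun a => Cconj (d a) * csum (fun b => d b * RtoC (K a b)) l)%C l) = 0 /\
  Re (csum (fun a => Cconj (d a) * csum (fun b => d b * RtoC (K a b)) l)%C l) =
    quad_form K (fun a => Re (d a)) l + quad_form K (fun a => Im (d a)) l.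
Proof.
  intros Hsym. rewrite Im_csum, Re_csum. split.
  - rewrite (lsum_ext _ (fun a => lsum (fun b => Re (d a) * Im (d b) * K a b) l
                                  + - lsum (fun b => Im (d a) * Re (d b) * K a b) l)).
    2:{ intros a _. rewrite Im_conj_mult, Re_csum, Im_csum, <- !lsum_scal.
        unfold Rminus. rewrite <- !lsum_opp, <- !lsum_plus.
        apply lsum_ext; intros b _. destruct (d b). unfold Re, Im; simpl. ring. }
    rewrite lsum_plus, lsum_opp, (lsum_exchange (fun a b => Im (d a) * Re (d b) * K a b)).
    rewrite (lsum_ext (fun b => lsum (fun a => Im (d a) * Re (d b) * K a b) l)
                      (fun a => lsum (fun b => Re (d a) * Im (d b) * K a b) l)); [ring|].
    intros a Ha. apply lsum_ext; intros b Hb. rewrite (Hsym b a) by auto. ring.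
  - unfold quad_form. rewrite <- lsum_plus. apply lsum_ext; intros a _.
    rewrite Re_conj_mult, Re_csum, Im_csum, <- !lsum_scal, <- !lsum_plus.
    apply lsum_ext; intros b _. destruct (d b). unfold Re, Im; simpl. ring.
Qed.

Theorem mainTheorem14 (g : sphere_metric) (Hinv : reflection_invariant g)
  (F : formal) (HF : in_Upsilon_0_B0 F) :
  Im (E g (mul_formal (Theta F) F)) = 0 /\ 0 <= Re (E g (mul_formal (Theta F) F)).
Proof.
  assert (Hsupp : forall Zs, In Zs (support F) -> B0_symbol Zs)
    by (intros Zs H; apply HF, in_support, H).
  rewrite E_mul_Theta.
  rewrite (csum_ext _ (fun Z1 => Cconj (coef F Z1) *
             csum (fun Z2 => coef F Z2 * RtoC (refl_kernel g Z1 Z2)) (support F))%C).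
  2:{ intros Z1 H1. f_equal. apply csum_ext. intros Z2 H2. rewrite E_sym_reflect; auto. }
  destruct (csum_hermitian_form (refl_kernel g) (coef F) (support F)) as [HIm HRe];
    [intros; apply refl_kernel_sym|].
  split; [exact HIm|]. rewrite HRe.
  apply Rplus_le_le_0_compat; apply refl_kernel_psd; auto.
Qed.
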